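(* For $k\ge0$ let $\bar H_k\in\mathbb{R}^{p\times p}$ be (random) symmetric matrices with symmetric indefinite factorizations $\bar H_k=P_k^TL_kB_kL_k^TP_k$. Let $\tau_k>0$ be thresholds and let $\underline{\tau}$ be a constant with $0<\underline{\tau}\le\tau_k$ for all $k$. Let $B_k=Q_k\Lambda_kQ_k^T$ be an eigendecomposition with $\Lambda_k=\mathrm{diag}(\lambda_{k1},\dots,\lambda_{kp})$, set $\bar\Lambda_k=\mathrm{diag}(\bar\lambda_{k1},\dots,\bar\lambda_{kp})$ with $\bar\lambda_{kj}=\max\{\tau_k,|\lambda_{kj}|\}$, and $\bar{\bar H}_k=P_k^TL_kQ_k\bar\Lambda_kQ_k^TL_k^TP_k$. Then: (a) $\lambda_{\min}(\bar{\bar H}_k)\ge\underline{\sigma}^2\underline{\tau}>0$; (b) $\bar{\bar H}_k^{-1}$ exists a.s., $c_k^2\bar{\bar H}_k^{-1}\to0$ a.s., and for some constants $\delta,\rho>0$, $\mathbb{E}\big[\|\bar{\bar H}_k^{-1}\|^{2+\delta}\big]\le\rho$.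
   Context: In the factorization $P_k\bar H_kP_k^T=L_kB_kL_k^T$: $P_k$ is a permutation matrix, $B_k$ is block diagonal with symmetric $1\times1$ or $2\times2$ blocks, and $L_k$ is unit lower triangular with entries bounded in magnitude by a fixed constant independent of $k$. $\underline{\sigma}>0$ is a constant, independent of $k$ and of the sample path, with $\sigma_{\min}(L_k)\ge\underline{\sigma}$ for all $k$ (smallest singular value). $\{c_k\}$ is a positive scalar sequence decreasing to $0$ (the perturbation-size gain of the second-order simultaneous-perturbation algorithm). *)

From HB Require Import structures.
From mathcomp Require Import all_boot all_order all_algebra.
From mathcomp Require Import all_classical all_reals all_analysis.
Set Implicit Arguments. Unset Strict Implicit. Unset Printing Implicit Defensive.
Import Order.TTheory GRing.Theory Num.Theory.
Import numFieldNormedType.Exports.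
Local Open Scope ring_scope.

Definition vnorm {R : realType} {p : nat} (x : 'cV[R]_p) : R :=
  Num.sqrt (\sum_i (x i 0) ^+ 2).

Definition opnorm {R : realType} {p : nat} (A : 'M[R]_p) : R :=
  sup [set vnorm (A *m x) | x in [set x : 'cV[R]_p | vnorm x = 1]].

Definition singular_value {R : realType} {p : nat} (L : 'M[R]_p) (s : R) : Prop :=
  0 <= s /\ eigenvalue (L^T *m L) (s ^+ 2).

Definition unit_lower_triangular {R : realType} {p : nat} (L : 'M[R]_p) : Prop :=
  (forall i, L i i = 1) /\ (forall i j : 'I_p, (i < j)%N -> L i j = 0).

Definition block_diag_1x1_2x2 {R : realType} {p : nat} (B : 'M[R]_p) : Prop :=
  B^T = B /\
  (forall i j : 'I_p, (j.+1 < i)%N -> B i j = 0) /\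
  (forall i j k : 'I_p, i = j.+1 :> nat -> k = i.+1 :> nat ->
       B i j != 0 -> B k i = 0).

From HB Require Import structures.
From mathcomp Require Import all_boot all_order all_algebra fingroup perm.
From mathcomp Require Import all_classical all_reals all_analysis.
From mathcomp Require Import complex ring lra measurable_realfun.
Import Order.TTheory GRing.Theory Num.Theory.
Import numFieldNormedType.Exports.
Set Implicit Arguments. Unset Strict Implicit.
Local Open Scope ring_scope.
Local Open Scope classical_set_scope.

(* Write u A u^T >= m |u|^2 for "the Rayleigh quotient of A is at least m".
   Such a bound with m > 0 forces every eigenvalue of A to be at least m, makes
   A invertible and gives |A^-1 y| <= |y| / m.  For the modified factorization
   X Lambda_bar X^T with X = P^T L Q one has
     u X Lambda_bar X^T u^T >= tau |u X|^2 = tau u P^T (L L^T) P u^T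
                            >= tau sigma^2 |u P^T|^2 = tau sigma^2 |u|^2,
   as P and Q are orthogonal and the eigenvalues of L L^T, which are those of
   L^T L, are squared singular values of L.  All bounds are deterministic and
   uniform in k: the almost sure statements hold everywhere, c_k^2 times a
   bounded sequence tends to 0, and every moment of |Hbb^-1| is at most a power
   of 1 / (sigma^2 tau). *)

Section RayleighQuotient.
Variable R : realFieldType.

Lemma rV_sqnorm_ge0 n (u : 'rV[R]_n) : 0 <= (u *m u^T) 0 0.
Proof. by rewrite mxE; apply: sumr_ge0 => i _; rewrite mxE -expr2 sqr_ge0. Qed.

Lemma rV_sqnorm_gt0 n (u : 'rV[R]_n) : u != 0 -> 0 < (u *m u^T) 0 0.
Proof.
move=> u_neq0; rewrite lt_neqAle rV_sqnorm_ge0 andbT eq_sym.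
apply: contra u_neq0; rewrite mxE psumr_eq0 => [/allP u0|i _]; last first.
  by rewrite mxE -expr2 sqr_ge0.
apply/eqP/rowP => j; have /implyP := u0 j (mem_index_enum j).
by rewrite mxE -expr2 sqrf_eq0 mxE => /(_ isT)/eqP.
Qed.

Definition rayleigh_lbound n (A : 'M[R]_n) (m : R) :=
  forall u : 'rV_n, m * (u *m u^T) 0 0 <= (u *m A *m u^T) 0 0.

Lemma rayleigh_lbound_eigenvalue n (A : 'M[R]_n) m a :
  rayleigh_lbound A m -> eigenvalue A a -> m <= a.
Proof.
move=> Am /eigenvalueP [v vA v_neq0]; have := Am v.
by rewrite vA -scalemxAl [X in _ <= X]mxE ler_pM2r // rV_sqnorm_gt0.
Qed.

Lemma rayleigh_lbound_unitmx n (A : 'M[R]_n) m :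
  0 < m -> rayleigh_lbound A m -> A \in unitmx.
Proof.
move=> m_gt0 Am; rewrite unitmxE unitfE; apply/negP => /det0P [v v_neq0 vA0].
have : eigenvalue A 0 by apply/eigenvalueP; exists v; rewrite ?vA0 ?scale0r.
by move=> /(rayleigh_lbound_eigenvalue Am); rewrite leNgt m_gt0.
Qed.

Lemma rayleigh_lbound1 n : rayleigh_lbound (1%:M : 'M[R]_n) 1.
Proof. by move=> u; rewrite mulmx1 mul1r. Qed.

Lemma rayleigh_lbound_diag n (d : 'rV[R]_n) m :
  (forall j, m <= d 0 j) -> rayleigh_lbound (diag_mx d) m.
Proof.
move=> d_ge u; rewrite !mxE mulr_sumr; apply: ler_sum => j _.
rewrite mul_mx_diag !mxE [X in _ <= X]mulrAC [X in _ <= X]mulrC.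
by rewrite ler_wpM2r // -expr2 sqr_ge0.
Qed.

Lemma rayleigh_lbound_congr n k (A : 'M[R]_k) (X : 'M[R]_(n, k)) m s :
  0 <= m -> rayleigh_lbound A m -> rayleigh_lbound (X *m X^T) s ->
  rayleigh_lbound (X *m A *m X^T) (s * m).
Proof.
move=> m_ge0 Am XXs u; have := Am (u *m X).
rewrite trmx_mul !mulmxA; apply: le_trans.
by rewrite mulrAC mulrC ler_wpM2l // -(mulmxA u) XXs.
Qed.

Lemma eigenvalue_gram_ge0 n k (A : 'M[R]_(n, k)) r :
  eigenvalue (A *m A^T) r -> 0 <= r.
Proof.
move=> /eigenvalueP [v vAA v_neq0].
have gram : (v *m A *m (v *m A)^T) 0 0 = r * (v *m v^T) 0 0.
  by rewrite trmx_mul mulmxA -(mulmxA v) vAA -scalemxAl mxE.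
have := rV_sqnorm_ge0 (v *m A); rewrite gram pmulr_lge0 //.
exact: rV_sqnorm_gt0.
Qed.

Lemma eigenvalue_mulmxC n (A B : 'M[R]_n) r :
  A \in unitmx -> eigenvalue (A *m B) r -> eigenvalue (B *m A) r.
Proof.
move=> A_unit /eigenvalueP [v vAB v_neq0]; apply/eigenvalueP; exists (v *m A).
  by rewrite mulmxA -(mulmxA v) vAB scalemxAl.
by apply: contra v_neq0 => /eqP vA0; rewrite -(mulmxK A_unit v) vA0 mul0mx.
Qed.

Lemma mul_tr_perm_mx n (P : 'M[R]_n) : is_perm_mx P -> P^T *m P = 1%:M.
Proof.
by move=> /is_perm_mxP [s ->]; rewrite tr_perm_mx -perm_mxM mulVg perm_mx1.
Qed.

Definition modified_factorization n (P L Q : 'M[R]_n) (d : 'rV[R]_n) :=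
  P^T *m L *m Q *m diag_mx d *m Q^T *m L^T *m P.

Lemma modified_factorization_rayleigh_lbound n (P L Q : 'M[R]_n) (d : 'rV[R]_n)
    s t :
  P^T *m P = 1%:M -> Q *m Q^T = 1%:M ->
  0 <= s -> rayleigh_lbound (L *m L^T) s ->
  0 <= t -> (forall j, t <= d 0 j) ->
  rayleigh_lbound (modified_factorization P L Q d) (s * t).
Proof.
move=> PP QQ s_ge0 LLs t_ge0 d_ge; set X := P^T *m L *m Q.
have -> : modified_factorization P L Q d = X *m diag_mx d *m X^T.
  by rewrite /modified_factorization /X !trmx_mul trmxK !mulmxA.
apply: rayleigh_lbound_congr t_ge0 (rayleigh_lbound_diag d_ge) _.
have -> : X *m X^T = P^T *m (L *m L^T) *m P^T^T.
  by rewrite /X !trmx_mul !mulmxA -(mulmxA _ Q) QQ mulmx1.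
rewrite -[s]mul1r; apply: rayleigh_lbound_congr s_ge0 LLs _.
by rewrite trmxK PP; exact: rayleigh_lbound1.
Qed.

End RayleighQuotient.

Section Spectral.
Variable C : numClosedFieldType.
Local Open Scope sesquilinear_scope.

Lemma spectralmx_mul_trC n (A : 'M[C]_n) :
  spectralmx A *m (spectralmx A)^t* = 1%:M.
Proof. exact/unitarymxP/spectral_unitarymx. Qed.

Lemma spectral_diag_eigenvalue n (A : 'M[C]_n) j :
  A \is normalmx -> eigenvalue A (spectral_diag A 0 j).
Proof.
move=> /orthomx_spectralP A_spectral; have UU := spectralmx_mul_trC A.
rewrite invmx_unitary ?spectral_unitarymx // in A_spectral.
move: A_spectral UU; set U := spectralmx A; set D := spectral_diag A.
move=> A_spectral UU; apply/eigenvalueP; exists (row j U).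
  rewrite A_spectral !mulmxA -row_mul UU row1 -rowE row_diag_mx.
  by rewrite -scalemxAl -rowE.
apply/eqP => /(congr1 (mulmx^~ (U^t*))); rewrite mul0mx -row_mul UU row1.
by move=> /rowP/(_ j); rewrite !mxE !eqxx => /eqP; rewrite oner_eq0.
Qed.

Lemma normalmx_rayleigh_lbound n (A : 'M[C]_n) m :
  A \is normalmx -> (forall j, m <= spectral_diag A 0 j) ->
  forall u : 'rV_n, m * (u *m u^t*) 0 0 <= (u *m A *m u^t*) 0 0.
Proof.
move=> /orthomx_spectralP A_spectral d_ge u; have UU := spectralmx_mul_trC A.
rewrite invmx_unitary ?spectral_unitarymx // in A_spectral.
move: A_spectral UU d_ge; set U := spectralmx A; set D := spectral_diag A.
move=> A_spectral UU d_ge; pose y := u *m U^t*.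
have yE : y^t* = U *m u^t* by rewrite /y trmx_mul map_mxM trmxCK.
have -> : u *m A *m u^t* = y *m diag_mx D *m y^t*.
  by rewrite yE A_spectral /y !mulmxA.
have -> : u *m u^t* = y *m y^t*.
  by rewrite yE /y !mulmxA -(mulmxA u) (mulmx1C UU) mulmx1.
rewrite !mxE mulr_sumr; apply: ler_sum => j _.
rewrite mul_mx_diag !mxE [X in _ <= X]mulrAC [X in _ <= X]mulrC.
by rewrite ler_wpM2r ?mul_conjC_ge0.
Qed.

End Spectral.

Section SymmetricReal.
Variable R : rcfType.
Local Notation toC := (real_complex R).

Lemma sym_rayleigh_lbound n (N : 'M[R]_n) m :
  N^T = N -> (forall r, eigenvalue N r -> m <= r) -> rayleigh_lbound N m.
Proof.
(* Over R[i], N is hermitian, hence unitarily diagonalizable with real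
   eigenvalues, and these are eigenvalues of N itself. *)
move=> N_sym N_ge u; set NC := map_mx toC N.
have NC_herm : NC \is hermsymmx.
  apply: realsym_hermsym.
    by apply/is_hermitianmxP; rewrite expr0 scale1r map_mx_id // map_trmx N_sym.
  by apply/mxOverP => i j; rewrite mxE; apply/complex_realP; exists (N i j).
have NC_normal := hermitian_normalmx NC_herm.
have d_ge j : toC m <= spectral_diag NC 0 j.
  have /mxOverP/(_ 0 j) := hermitian_spectral_diag_real NC_herm.
  move=> /complex_realP [r d_r]; rewrite d_r lecR; apply: N_ge.
  rewrite -(eigenvalue_map toC) -/NC.
  by have := spectral_diag_eigenvalue j NC_normal; rewrite d_r.
have := normalmx_rayleigh_lbound NC_normal d_ge (map_mx toC u).
have uT : ((map_mx toC u)^t*)%sesqui = map_mx toC u^T.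
  apply/matrixP => i j; rewrite !mxE /=.
  by apply/CrealP/complex_realP; exists (u j i).
by rewrite uT -!map_mxM !mxE -rmorphM lecR.
Qed.

End SymmetricReal.

Section RealMatrices.
Variable R : realType.

Lemma unit_lower_triangular_unitmx n (L : 'M[R]_n) :
  unit_lower_triangular L -> L \in unitmx.
Proof.
case=> L_diag L_upper; rewrite unitmxE det_trig; last first.
  by apply/is_trig_mxP => i j /L_upper.
by rewrite big1 ?unitr1 // => i _; rewrite L_diag.
Qed.

Lemma gram_rayleigh_lbound n (L : 'M[R]_n) s0 :
  L \in unitmx -> 0 <= s0 -> (forall s, singular_value L s -> s0 <= s) ->
  rayleigh_lbound (L *m L^T) (s0 ^+ 2).
Proof.
move=> L_unit s0_ge0 L_sing; apply: sym_rayleigh_lbound.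
  by rewrite trmx_mul trmxK.
move=> r /[dup] /eigenvalue_gram_ge0 r_ge0 /(eigenvalue_mulmxC L_unit) LL_r.
rewrite -(sqr_sqrtr r_ge0) lerXn2r ?nnegrE ?sqrtr_ge0 //.
by apply: L_sing; split; rewrite ?sqrtr_ge0 ?sqr_sqrtr.
Qed.

Lemma rayleigh_lbound_vnorm n (A : 'M[R]_n) m (x : 'cV_n) :
  0 <= m -> rayleigh_lbound A m -> m * vnorm x <= vnorm (A *m x).
Proof.
move=> m_ge0 Am; pose y := A *m x.
pose a := \sum_i x i 0 ^+ 2; pose b := \sum_i y i 0 ^+ 2.
pose c := \sum_i x i 0 * y i 0.
have a_ge0 : 0 <= a by apply: sumr_ge0 => i _; exact: sqr_ge0.
have b_ge0 : 0 <= b by apply: sumr_ge0 => i _; exact: sqr_ge0.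
have ma_le_c : m * a <= c.
  have := Am x^T; rewrite trmxK -mulmxA -/y !mxE.
  congr (_ * _ <= _); last by apply: eq_bigr => j _; rewrite mxE.
  by apply: eq_bigr => j _; rewrite mxE expr2.
(* Expand 0 <= |A x - m x|^2 and use m |x|^2 <= <x, A x>. *)
have dist_ge0 : 0 <= b - 2 * m * c + m ^+ 2 * a.
  have -> : b - 2 * m * c + m ^+ 2 * a = \sum_i (y i 0 - m * x i 0) ^+ 2.
    rewrite /a /b /c !mulr_sumr -sumrB -big_split /=.
    by apply: eq_bigr => i _; ring.
  by apply: sumr_ge0 => i _; exact: sqr_ge0.
rewrite /vnorm -/a -/b -(ger0_norm m_ge0) -sqrtr_sqr -sqrtrM ?sqr_ge0 //.
by rewrite ler_sqrt //; nra.
Qed.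

Lemma rayleigh_lbound_invmx_vnorm n (A : 'M[R]_n) m (y : 'cV_n) :
  0 < m -> rayleigh_lbound A m -> vnorm (invmx A *m y) <= m^-1 * vnorm y.
Proof.
move=> m_gt0 Am; have := rayleigh_lbound_vnorm (invmx A *m y) (ltW m_gt0) Am.
by rewrite mulmxA mulmxV ?mul1mx ?(rayleigh_lbound_unitmx m_gt0) // ler_pdivlMl.
Qed.

Lemma vnorm_delta n (j : 'I_n) : vnorm (delta_mx j 0 : 'cV[R]_n) = 1.
Proof.
rewrite /vnorm (bigD1 j) //= big1 => [|k k_neq_j]; last first.
  by rewrite mxE (negbTE k_neq_j) expr0n.
by rewrite mxE !eqxx expr1n addr0 sqrtr1.
Qed.

Lemma opnorm_bounded n (A : 'M[R]_n) K : 0 <= K ->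
  (forall x, vnorm (A *m x) <= K * vnorm x) -> 0 <= opnorm A <= K.
Proof.
move=> K_ge0 AK; rewrite /opnorm; set S := [set _ | _ in _].
have S_ub : ubound S K.
  by move=> y [x /= x1 <-]; have := AK x; rewrite x1 mulr1.
have [->|/set0P S_neq0] := eqVneq S set0; first by rewrite sup0 lexx.
rewrite ge_sup // andbT; case: S_neq0 => y Sy.
apply: le_trans _ (ub_le_sup (ex_intro _ K S_ub) Sy).
by case: Sy => x _ <-; exact: sqrtr_ge0.
Qed.

Lemma mx_entry_le n (A : 'M[R]_n) K :
  (forall x, vnorm (A *m x) <= K * vnorm x) -> forall i j, `|A i j| <= K.
Proof.
move=> AK i j; have := AK (delta_mx j 0); rewrite vnorm_delta mulr1.
apply: le_trans; rewrite -colE /vnorm -sqrtr_sqr ler_sqrt; last first.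
  by apply: sumr_ge0 => k _; exact: sqr_ge0.
rewrite (bigD1 i) //= mxE lerDl; apply: sumr_ge0 => k _; exact: sqr_ge0.
Qed.

Lemma mx_norm_le m n (A : 'M[R]_(m, n)) K :
  0 <= K -> (forall i j, `|A i j| <= K) -> `|A| <= K.
Proof. by move=> K_ge0 AK; rewrite [`|A|]mx_normrE; apply: bigmax_le. Qed.

End RealMatrices.

Lemma cvg_scale_bounded0 (R : realFieldType) (V : normedModType R)
    (a : nat -> R) (v : nat -> V) K :
  a @ \oo --> 0 -> (forall k, `|v k| <= K) -> (fun k => a k *: v k) @ \oo --> 0.
Proof.
move=> a_cvg0 vK; apply: norm_cvg0.
apply: (@squeeze_cvgr _ _ _ _ (fun=> 0) (fun k => `|a k| * K)) => //.
- by apply: nearW => k; rewrite normr_ge0 normrZ ler_wpM2l.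
- exact: cvg_cst.
- by have := cvgM (cvg_norm a_cvg0) (cvg_cst K); rewrite normr0 mul0r; exact.
Qed.

Import HBNNSimple.

Lemma probability_integral_le (R : realType) d (T : measurableType d)
    (Pr : probability T R) (f : T -> R) M :
  (forall x, 0 <= f x) -> (forall x, f x <= M) ->
  (\int[Pr]_x (f x)%:E <= M%:E)%E.
Proof.
(* f need not be measurable: its integral is the supremum of the integrals of
   the simple functions below it, each of which is below the constant M. *)
move=> f_ge0 f_le; rewrite ge0_integralTE => [|x]; last by rewrite lee_fin.
apply: ge_ereal_sup => _ [h /= h_le <-]; rewrite -integralT_nnsfun.
apply: (@le_trans _ _ (M%:E * Pr [set: T])%E); last first.
  by rewrite probability_setT mule1.
apply: (@le_trans _ _ (\int[Pr]_x (cst M%:E) x)%E); last first.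
  by rewrite integral_cst.
apply: ge0_le_integral => //.
- by move=> x _; rewrite lee_fin fun_ge0.
- exact/measurable_EFinP.
- by move=> x _; apply: le_trans (h_le x) _; rewrite lee_fin.
Qed.

Theorem theoremA2 (R : realType) (d : measure_display) (T : measurableType d)
  (Pr : probability T R) (p : nat)
  (Hb : nat -> T -> 'M[R]_p)          (* \bar H_k *)
  (P L B Q : nat -> T -> 'M[R]_p)     (* P_k, L_k, B_k, Q_k *)
  (lam : nat -> T -> 'rV[R]_p)        (* diagonal of Lambda_k *)
  (tau : nat -> T -> R) (tau_lo : R)
  (sigma_lo : R) (Lbnd : R) (c : nat -> R) :
  (forall k w, (Hb k w)^T = Hb k w) ->
  (forall k w, is_perm_mx (P k w)) ->
  (forall k w, unit_lower_triangular (L k w)) ->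
  (forall k w (i j : 'I_p), `|L k w i j| <= Lbnd) ->
  (forall k w, block_diag_1x1_2x2 (B k w)) ->
  (forall k w, Hb k w = (P k w)^T *m L k w *m B k w *m (L k w)^T *m P k w) ->
  0 < sigma_lo ->
  (forall k w s, singular_value (L k w) s -> sigma_lo <= s) ->
  (forall n, 0 < c n) -> (forall n, c n.+1 <= c n) -> c @ \oo --> 0 ->
  0 < tau_lo -> (forall k w, tau_lo <= tau k w) ->
  (forall k w, Q k w *m (Q k w)^T = 1%:M) ->
  (forall k w, B k w = Q k w *m diag_mx (lam k w) *m (Q k w)^T) ->
  let Hbb := fun k w =>
    (P k w)^T *m L k w *m Q k w
      *m diag_mx (\row_j Num.max (tau k w) `|lam k w 0 j|)
      *m (Q k w)^T *m (L k w)^T *m P k w in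
  (* (a) *)
  ((forall k w a, eigenvalue (Hbb k w) a -> sigma_lo ^+ 2 * tau_lo <= a)
   /\ 0 < sigma_lo ^+ 2 * tau_lo)
  /\
  (* (b) *)
  ({ae Pr, forall w, forall k, Hbb k w \in unitmx}
   /\ {ae Pr, forall w, (fun k => c k ^+ 2 *: invmx (Hbb k w)) @ \oo --> (0 : 'M[R]_p)}
   /\ exists delta rho : R, 0 < delta /\ 0 < rho /\
        forall k, (\int[Pr]_w ((opnorm (invmx (Hbb k w))) `^ (2 + delta))%:E
                   <= rho%:E)%E).
Proof.
move=> _ P_perm L_tri _ _ _ sigma_gt0 L_sing _ _ c_cvg0 tau_gt0 tau_ge Q_orth _.
move=> Hbb; set m := sigma_lo ^+ 2 * tau_lo.
have m_gt0 : 0 < m by rewrite mulr_gt0 ?exprn_gt0.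
have L_unit k w := unit_lower_triangular_unitmx (L_tri k w).
have Hbb_lbound k w : rayleigh_lbound (Hbb k w) m.
  apply: modified_factorization_rayleigh_lbound.
  - exact: mul_tr_perm_mx.
  - exact: Q_orth.
  - exact: sqr_ge0.
  - exact: gram_rayleigh_lbound (L_unit k w) (ltW sigma_gt0) (L_sing k w).
  - exact: ltW.
  - by move=> j; rewrite mxE le_max tau_ge.
have inv_m_ge0 : 0 <= m^-1 by rewrite invr_ge0 ltW.
have Hbb_unit k w := rayleigh_lbound_unitmx m_gt0 (Hbb_lbound k w).
have inv_vnorm k w y := rayleigh_lbound_invmx_vnorm y m_gt0 (Hbb_lbound k w).
split; first by split=> // k w a; exact: rayleigh_lbound_eigenvalue.
split; first exact: aeW.
split.
  apply: aeW => w; apply: (cvg_scale_bounded0 (K := m^-1)).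
    by have := cvgM c_cvg0 c_cvg0; rewrite mul0r; exact.
  by move=> k; exact: mx_norm_le inv_m_ge0 (mx_entry_le (inv_vnorm k w)).
exists 1, (m^-1 `^ (2 + 1)); split=> //.
split; first by rewrite powR_gt0 ?invr_gt0.
move=> k; apply: probability_integral_le => w; first exact: powR_ge0.
have /andP [opnorm_ge0 opnorm_le] := opnorm_bounded inv_m_ge0 (inv_vnorm k w).
by apply: ge0_ler_powR.
Qed.
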